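(* Let $N\ge1$, $k\ge2$, and consider the large-batch model of the round-based $k$IC batch labeling algorithm starting from the uniform class distribution $\pi_i=1/N$, $1\le i\le N$. Then the class distribution of the batch remains uniform in every round $r$, the settling probability in every round is $$P(s\in\mathcal{L}_r)=1-\frac{N}{k}\Big(1-\big(1-\tfrac{1}{N}\big)^k\Big),$$ and the average query rate over round $r$ alone, $R^{kIC}_{2,r}=1/(k\,P(s\in\mathcal{L}_r))$, and over rounds $1,\dots,r$, $R^{kIC}_{2,1:r}$, both equal $$\frac{1}{k-N\big(1-(1-\frac1N)^k\big)}.$$ Moreover this quantity is asymptotically equal to $\frac{2N}{k(k-1)}$ as $N\to\infty$ with $k$ fixed.
   Context: Large-batch model: in each round each $k$IC query consists of $k$ samples with i.i.d. classes drawn from the current batch class distribution $\boldsymbol{\pi}$; an error-free oracle reveals which samples share a class; one representative per class present is returned to the next batch and the others are settled. The settling probability $P(s\in\mathcal{L})$ is the expected number of settled samples per query divided by $k$, and the next batch's class distribution is $\pi'_i=\frac{1-(1-\pi_i)^k}{N-\sum_j(1-\pi_j)^k}$. Batch sizes evolve as $L_{r+1}=L_r(1-p_r)$ with $p_r$ the settling probability in round $r$; round $r$ uses $L_r/k$ queries and settles $L_rp_r$ samples; $R^{kIC}_{2,1:r}$ is total queries over rounds $1,\dots,r$ divided by total settled samples over these rounds. *)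

From HB Require Import structures.
From mathcomp Require Import all_boot all_order all_algebra.
From mathcomp Require Import all_classical all_reals all_analysis.
Unset Implicit Arguments. Unset Printing Implicit Defensive.
Import Order.TTheory GRing.Theory Num.Theory.
Local Open Scope ring_scope.

Section KIC.
Variable R : realType.

Definition cdist (N : nat) := 'I_N -> R.

Definition unif_dist (N : nat) : cdist N := fun _ => (N%:R)^-1.

Definition query_prob (N k : nat) (pi : cdist N) (c : {ffun 'I_k -> 'I_N}) : R :=
  \prod_(j < k) pi (c j).

(* Number of settled samples in a query: k minus the number of distinct
   classes present (one representative per class is returned). *)
Definition n_settled (N k : nat) (c : {ffun 'I_k -> 'I_N}) : nat :=
  (k - #|[set c j | j in 'I_k]|)%N.

Definition settle_prob (N k : nat) (pi : cdist N) : R :=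
  (\sum_(c : {ffun 'I_k -> 'I_N}) query_prob N k pi c * (n_settled N k c)%:R) / k%:R.

Definition next_dist (N k : nat) (pi : cdist N) : cdist N :=
  fun i => (1 - (1 - pi i) ^+ k) / (N%:R - \sum_(j < N) (1 - pi j) ^+ k).

(* Class distribution in round r (rounds numbered from 1), from the uniform start. *)
Definition round_dist (N k r : nat) : cdist N :=
  iter r.-1 (next_dist N k) (unif_dist N).

Definition round_settle (N k r : nat) : R := settle_prob N k (round_dist N k r).

(* Batch size L_r, with L_1 = L1 and L_{r+1} = L_r (1 - p_r). *)
Definition batch_size (N k : nat) (L1 : R) (r : nat) : R :=
  L1 * \prod_(1 <= s < r) (1 - round_settle N k s).

Definition rate_round (N k r : nat) : R := (k%:R * round_settle N k r)^-1.

(* Query rate over rounds 1..r: total queries / total settled samples. *)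
Definition rate_cum (N k : nat) (L1 : R) (r : nat) : R :=
  (\sum_(1 <= s < r.+1) batch_size N k L1 s / k%:R) /
  (\sum_(1 <= s < r.+1) batch_size N k L1 s * round_settle N k s).

Definition rate_closed (N k : nat) : R :=
  (k%:R - N%:R * (1 - (1 - (N%:R)^-1) ^+ k))^-1.

End KIC.

From HB Require Import structures.
From mathcomp Require Import all_boot all_order all_algebra.
From mathcomp Require Import all_classical all_reals all_analysis.
From mathcomp Require Import ring.
Import Order.TTheory GRing.Theory Num.Theory.
Import numFieldNormedType.Exports.
Local Open Scope ring_scope.

(* Class i is absent from a query with probability (1 - pi_i)^k, so a query
   contains sum_i (1 - (1 - pi_i)^k) distinct classes on average.  At the
   uniform distribution all classes get the same mass in the next batch, so
   the uniform distribution is a fixed point: every round has the same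
   settling probability p, and since every round settles k p samples per
   query, so do rounds 1..r together.  For the asymptotics put x = 1/N: then
   k - N (1 - (1 - x)^k) = x q(x), where x^2 q(x) = (1 - x)^k - 1 + k x
   defines a polynomial q with q(0) = C(k, 2).  Hence the rate is
   N / q(1/N) ~ N / C(k, 2) = 2N / (k (k - 1)). *)

Section SettlingProbability.
Variables (R : realType) (N k : nat).
Implicit Types (pi : cdist R N) (c : {ffun 'I_k -> 'I_N}).

Lemma sum_query_prob pi :
  \sum_c query_prob R N k pi c = (\sum_i pi i) ^+ k.
Proof.
by rewrite -(bigA_distr_bigA (fun _ : 'I_k => pi)) prodr_const card_ord.
Qed.

Lemma query_prob_absent pi i c :
  query_prob R N k pi c * (i \notin [set c j | j in 'I_k])%:R =
  \prod_(j < k) (pi (c j) * (c j != i)%:R).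
Proof.
rewrite /query_prob big_split /=; congr (_ * _).
have [/imsetP[j _ ->] | iNc] := boolP (i \in _).
  by rewrite (bigD1 j) //= eqxx mul0r.
rewrite big1 // => j _; case: eqP => // cj_i.
by case/negP: iNc; apply/imsetP; exists j.
Qed.

Lemma sum_query_prob_absent pi i :
  \sum_c query_prob R N k pi c * (i \notin [set c j | j in 'I_k])%:R =
  (\sum_j pi j - pi i) ^+ k.
Proof.
under eq_bigr do rewrite query_prob_absent.
rewrite -(bigA_distr_bigA (fun (_ : 'I_k) x => pi x * (x != i)%:R)).
rewrite prodr_const card_ord (bigD1 i) //= eqxx mulr0 add0r.
rewrite [in RHS](bigD1 i) //= addrAC subrr add0r.
by congr (_ ^+ _); apply: eq_bigr => j ji; rewrite ji mulr1.
Qed.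

Lemma card_image_absent c :
  #|[set c j | j in 'I_k]|%:R =
  \sum_i (1 - (i \notin [set c j | j in 'I_k])%:R) :> R.
Proof.
rewrite -sum1_card natr_sum big_mkcond /=; apply: eq_bigr => i _.
by case: (i \in _); rewrite ?subr0 ?subrr.
Qed.

Lemma expected_classes pi : \sum_i pi i = 1 ->
  \sum_c query_prob R N k pi c * #|[set c j | j in 'I_k]|%:R =
  \sum_i (1 - (1 - pi i) ^+ k).
Proof.
move=> pi1; rewrite (eq_bigr (fun c => \sum_i (query_prob R N k pi c -
    query_prob R N k pi c * (i \notin [set c j | j in 'I_k])%:R))); last first.
  move=> c _; rewrite card_image_absent mulr_sumr.
  by apply: eq_bigr => i _; rewrite mulrBr mulr1.
rewrite exchange_big /=; apply: eq_bigr => i _.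
by rewrite sumrB sum_query_prob sum_query_prob_absent pi1 expr1n.
Qed.

Lemma settle_probE pi : \sum_i pi i = 1 ->
  settle_prob R N k pi = (k%:R - \sum_i (1 - (1 - pi i) ^+ k)) / k%:R.
Proof.
move=> pi1; rewrite /settle_prob -expected_classes //; congr (_ / _).
have card_image_le c : (#|[set c j | j in 'I_k]| <= k)%N.
  by rewrite -[k in (_ <= k)%N]card_ord leq_imset_card.
under eq_bigr => c _ do rewrite /n_settled natrB // mulrBr.
by rewrite sumrB -mulr_suml sum_query_prob pi1 expr1n mul1r.
Qed.

End SettlingProbability.

Section UniformStart.
Variables (R : realType) (N k : nat).
Hypotheses (N_gt0 : (0 < N)%N) (k_gt0 : (0 < k)%N).

Let Nr_neq0 : N%:R != 0 :> R. Proof. by rewrite pnatr_eq0 -lt0n. Qed.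
Let kr_neq0 : k%:R != 0 :> R. Proof. by rewrite pnatr_eq0 -lt0n. Qed.

Lemma absent_unif_lt1 : (1 - N%:R^-1) ^+ k < 1 :> R.
Proof.
rewrite exprn_ilt1 -?lt0n //.
  by rewrite subr_ge0 invf_le1 ?ler1n ?ltr0n.
by rewrite ltrBlDr ltrDl invr_gt0 ltr0n.
Qed.

Lemma sum_unif_dist : \sum_i unif_dist R N i = 1.
Proof. by rewrite /unif_dist sumr_const card_ord -[_ *+ N]mulr_natr mulVf. Qed.

Lemma next_dist_unif : next_dist R N k (unif_dist R N) = unif_dist R N.
Proof.
apply/funext => i; rewrite /next_dist /unif_dist sumr_const card_ord.
have : 1 - (1 - N%:R^-1) ^+ k != 0 :> R.
  by rewrite subr_eq0 eq_sym lt_eqF ?absent_unif_lt1.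
move: (_ ^+ k) => a a_neq1; rewrite -[_ *+ N]mulr_natl; field.
by rewrite Nr_neq0 -[X in X - _]mul1r -mulrBl mulf_neq0.
Qed.

Lemma round_distE r : round_dist R N k r = unif_dist R N.
Proof.
by rewrite /round_dist; elim: r.-1 => //= n ->; rewrite next_dist_unif.
Qed.

Lemma round_settleE r :
  round_settle R N k r = 1 - N%:R / k%:R * (1 - (1 - N%:R^-1) ^+ k).
Proof.
rewrite /round_settle round_distE settle_probE ?sum_unif_dist //.
rewrite /unif_dist sumr_const card_ord -mulr_natl; field.
by rewrite kr_neq0.
Qed.

Lemma rate_roundE r : rate_round R N k r = rate_closed R N k.
Proof.
by rewrite /rate_round round_settleE /rate_closed; congr _^-1; field.
Qed.

Lemma batch_size_ge0 L1 s : 0 <= L1 -> 0 <= batch_size R N k L1 s.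
Proof.
move=> L1_ge0; rewrite /batch_size mulr_ge0 // prodr_ge0 // => t _.
rewrite round_settleE opprB addrC subrK mulr_ge0 ?divr_ge0 // subr_ge0.
exact/ltW/absent_unif_lt1.
Qed.

Lemma rate_cumE L1 r : 0 < L1 -> (0 < r)%N ->
  rate_cum R N k L1 r = rate_closed R N k.
Proof.
move=> L1_gt0 r_gt0; set L := batch_size R N k L1.
have S_gt0 : 0 < \sum_(1 <= s < r.+1) L s.
  rewrite big_ltn // {1}/L /batch_size big_geq // mulr1 ltr_wpDr //.
  by rewrite sumr_ge0 // => s _; rewrite batch_size_ge0 ?ltW.
rewrite /rate_cum -/L -mulr_suml.
under [X in _ / X]eq_bigr do rewrite round_settleE.
rewrite -mulr_suml -(rate_roundE r) /rate_round round_settleE.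
by rewrite !invfM mulrACA mulfV ?gt_eqF ?mul1r.
Qed.

End UniformStart.

Section BinomialTail.
Variable R : comNzRingType.

Definition binom_tail_poly (k : nat) : {poly R} :=
  \poly_(i < k.-1) ((-1) ^+ i * 'C(k, i.+2)%:R).

Lemma binom_tail_polyE k x :
  x ^+ 2 * (binom_tail_poly k).[x] = (1 - x) ^+ k - 1 + k%:R * x.
Proof.
case: k => [|[|k]]; rewrite /binom_tail_poly.
  1,2: by rewrite poly_def big_ord0 horner0; ring.
rewrite horner_poly [1 - x]addrC exprD1n 2![in RHS]big_ord_recl /=.
rewrite [in RHS](eq_bigr (fun i : 'I_k.+1 =>
  x ^+ 2 * ((-1) ^+ i * 'C(k.+2, i.+2)%:R * x ^+ i))) -?mulr_sumr.
  by rewrite expr0 bin0 expr1 bin1; ring.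
by move=> i _; rewrite !exprS -[- x]mulN1r exprMn -mulr_natr; ring.
Qed.

Lemma binom_tail_poly0 k : (binom_tail_poly k).[0] = 'C(k, 2)%:R.
Proof.
by rewrite horner_coef0 coef_poly; case: k => [|[|k]] //=; rewrite mul1r.
Qed.

End BinomialTail.

Lemma natr_bin2 (R : pzRingType) n : 'C(n, 2)%:R * 2 = n%:R * (n%:R - 1) :> R.
Proof.
case: n => [|n]; first by rewrite !mul0r.
by rewrite -[2]/(2`!%:R) -natrM bin_ffact ffactnS ffactn1 natrM -natr1 addrK.
Qed.

Local Open Scope classical_set_scope.

Section Asymptotics.
Variable R : realType.

Lemma rate_closedE N k : (0 < N)%N ->
  rate_closed R N k = N%:R / (binom_tail_poly R k).[N%:R^-1].
Proof.
move=> N_gt0; have N_neq0 : N%:R != 0 :> R by rewrite pnatr_eq0 -lt0n.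
rewrite /rate_closed -invf_div; congr _^-1.
transitivity (N%:R * (N%:R^-1 ^+ 2 * (binom_tail_poly R k).[N%:R^-1])).
  by rewrite binom_tail_polyE; field.
by field.
Qed.

Lemma cvg_inv_natr : (fun N : nat => N%:R^-1 : R) @ \oo --> 0.
Proof. by rewrite -cvg_shiftS; exact: cvg_harmonic. Qed.

Lemma rate_closed_asymptotic k : (1 < k)%N ->
  (fun N : nat => rate_closed R N k / (2 * N%:R / (k%:R * (k%:R - 1))))
    @ \oo --> (1 : R).
Proof.
move=> k_gt1; set C : R := 'C(k, 2)%:R; set q := binom_tail_poly R k.
have C_neq0 : C != 0 by rewrite pnatr_eq0 -lt0n bin_gt0.
have q_cvg : (fun N : nat => q.[N%:R^-1]) @ \oo --> C.
  rewrite /C -binom_tail_poly0.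
  exact: (continuous_cvg _ (@continuous_horner _ q 0) cvg_inv_natr).
rewrite -[X in _ --> X](mulfV C_neq0).
apply: cvg_trans (cvgM (cvg_cst C) (cvgV C_neq0 q_cvg)).
apply: near_eq_cvg; near=> N.
have N_gt0 : (0 < N)%N by near: N; exists 1%N.
rewrite /= rate_closedE // -natr_bin2 -/C -/q; move: (q.[_]^-1) => y.
by field; rewrite C_neq0 pnatr_eq0 -lt0n N_gt0.
Unshelve. all: by end_near.
Qed.

End Asymptotics.

Theorem corollary3 (R : realType) (k : nat) (hk : (2 <= k)%N) :
  (forall (N : nat), (1 <= N)%N -> forall (L1 : R), 0 < L1 ->
   forall (r : nat), (1 <= r)%N ->
     (forall i : 'I_N, round_dist R N k r i = (N%:R)^-1) /\
     round_settle R N k r = 1 - N%:R / k%:R * (1 - (1 - (N%:R)^-1) ^+ k) /\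
     rate_round R N k r = rate_closed R N k /\
     rate_cum R N k L1 r = rate_closed R N k) /\
  ((fun N : nat => rate_closed R N k / (2 * N%:R / (k%:R * (k%:R - 1))))
     @ \oo --> (1 : R)).
Proof.
split=> [N N_gt0 L1 L1_gt0 r r_gt0|]; last exact: rate_closed_asymptotic.
have k_gt0 : (0 < k)%N by apply: ltnW.
split; first by move=> i; rewrite round_distE.
by rewrite round_settleE // rate_roundE // rate_cumE.
Qed.
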